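(* Let $h$ be sufficiently small and $T$ an interface element (curve or line variant). For arbitrary points $\overline X_i\in l$, $i\in\mathcal I$, define for $s=\pm$ and $X\in T_p^s$ $$\boldsymbol\Lambda_s(X)=\sum_{i\in\mathcal I}(M_i-X)\phi^s_{i,T}(X)+\sum_{i\in\mathcal I^{s'}}(\overline M^s(F)-I)^T(M_i-\overline X_i)\phi^s_{i,T}(X)+\sum_{i\in\mathcal I^{int}}\frac1{|b_i|}\int_{b_i\cap T^{s'}}(\overline M^s(F)-I)^T(P-\overline X_i)\,ds(P)\,\phi^s_{i,T}(X),$$ and $\boldsymbol\Lambda=\boldsymbol\Lambda_+$ on $T_p^+$, $\boldsymbol\Lambda=(\overline M^+(F))^T\boldsymbol\Lambda_-$ on $T_p^-$. Then $\boldsymbol\Lambda\in[S_h^{int}(T)]^2$ and $\int_{b_i}\boldsymbol\Lambda\,ds=\mathbf 0$ for every $i\in\mathcal I$.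
   Context: Standard setting. $\Omega\subset\mathbb R^2$ is a bounded domain that is a finite union of rectangles, separated by a curve $\Gamma$ into open subdomains $\Omega^+,\Omega^-$ with $\overline\Omega=\overline{\Omega^+}\cup\overline{\Omega^-}\cup\Gamma$; $\beta^\pm>0$ are constants and $\rho=\beta^-/\beta^+$. $\mathcal T_h$ is a Cartesian mesh of $\Omega$ made either of rectangles or of triangles (Cartesian rectangles cut along a diagonal), with maximal edge length $h$. An element $T$ is an interface element if its interior meets $\Gamma$. The mesh satisfies: (H1) $\Gamma$ does not intersect an edge of any element at more than two points unless the edge is part of $\Gamma$; (H2) if $\Gamma$ meets the boundary of an element at two points, they lie on different edges; (H3) $\Gamma$ is piecewise $C^2$ and $\Gamma\cap T$ is $C^2$ for every interface element $T$; (H4) $PC^2_{int}(T)$ is dense in $PH^2_{int}(T)$ for every interface element $T$. On an interface element $T$, $D,E$ are the two points of $\Gamma\cap\partial T$, $l$ is the segment $DE$, $\bar{\mathbf n}=(\bar n_x,\bar n_y)^T$ is a unit normal to $l$, and $T^\pm=T\cap\Omega^\pm$. IFE setting. Let $T$ be an interface element with edges $b_i$, $i\in\mathcal I=\{1,\dots,N\}$ ($N=3$ for triangles, $N=4$ for rectangles) and midpoints $M_i$ of $b_i$. $\Pi_T=\mathrm{span}\{1,x,y\}$ (Crouzeix–Raviart, triangles) or $\Pi_T=\mathrm{span}\{1,x,y,x^2-y^2\}$ (rotated-$Q_1$, rectangles). Set $\mathcal I^s=\{i:b_i\subseteq\overline{T^s}\}$, $\mathcal I^{int}=\{i: b_i\cap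 T^+\ne\emptyset\text{ and }b_i\cap T^-\ne\emptyset\}$ ($s=\pm$); $s'$ denotes the sign opposite to $s$. One of two variants is fixed: (curve) a point $F\in\Gamma\cap T$, $F\neq D,E$, $\mathbf v(F)=\mathbf n(F)$ the unit normal to $\Gamma$ at $F$ oriented so that $\bar{\mathbf n}\cdot\mathbf n(F)>0$, and $T_p^\pm=T^\pm$; (line) a point $F\in l$, $\mathbf v(F)=\bar{\mathbf n}$, and $T_p^\pm$ are the two parts into which $l$ cuts $T$, $T_p^s$ being the one on the same side of $l$ as $\partial T\cap \overline{T^s}$. An IFE function on $T$ is a function $\phi_T$ with $\phi_T|_{T_p^s}=\phi_T^s$, $\phi_T^s\in\Pi_T$ ($s=\pm$), satisfying (J1) $\phi_T^-=\phi_T^+$ on $l$, and additionally $\partial_{xx}\phi_T^-=\partial_{xx}\phi_T^+$ in the rotated-$Q_1$ case; (J2) $\beta^-\nabla\phi_T^-(F)\cdot\mathbf v(F)=\beta^+\nabla\phi_T^+(F)\cdot\mathbf v(F)$. $S_h^{int}(T)$ denotes the linear space of IFE functions on $T$, and $\phi_{i,T}$, $i\in\mathcal I$, are the IFE functions with $\frac1{|b_j|}\int_{b_j}\phi_{i,T}\,ds=\delta_{ij}$ (they exist and are unique for $h$ small enough); $\phi^s_{i,T}\in\Pi_T$ is the polynomial piece of $\phi_{i,T}$ on $T^s_p$, regarded as a polynomial on all of $\mathbb R^2$. With $\mathbf v(F)=(v_x,v_y)^T$ and $r_s=\beta^s/\beta^{s'}$, $$\overline M^s(F)=\frac{1}{\bar{\mathbf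 n}\cdot\mathbf v(F)}\begin{pmatrix}\bar n_yv_y+r_s\bar n_xv_x & (r_s-1)\bar n_xv_y\\ (r_s-1)\bar n_yv_x & \bar n_xv_x+r_s\bar n_yv_y\end{pmatrix}.$$ *)

From Stdlib Require Import Reals Lra ClassicalEpsilon.
Open Scope R_scope.

Definition pt : Type := (R * R)%type.
Definition padd (P Q : pt) : pt := (fst P + fst Q, snd P + snd Q).
Definition psub (P Q : pt) : pt := (fst P - fst Q, snd P - snd Q).
Definition pscal (a : R) (P : pt) : pt := (a * fst P, a * snd P).
Definition dot (P Q : pt) : R := fst P * fst Q + snd P * snd Q.
Definition pnorm (P : pt) : R := sqrt (dot P P).
Definition vcomp (k : bool) (P : pt) : R := if k then fst P else snd P.

Definition ind (P : Prop) : R :=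
  if excluded_middle_informative P then 1 else 0.

(* Riemann integral of f over [a,b] (0 if f is not Riemann integrable) *)
Definition Rint (f : R -> R) (a b : R) : R :=
  match excluded_middle_informative (exists _ : Riemann_integrable f a b, True) with
  | left H => RiemannInt (proj1_sig (constructive_indefinite_description _ H))
  | right _ => 0
  end.

(* Rect: the Cartesian rectangle with corners (x0,y0), (x0+hx,y0+hy);
   Tri : the half of such a rectangle cut along a diagonal, with right-angle
         vertex (x0,y0) (signs of hx, hy give the four possible halves). *)
Inductive elem_kind := Tri | Rect.
Definition nedges (k : elem_kind) : nat := match k with Tri => 3%nat | Rect => 4%nat end.

Record elem := mkElem { ekind : elem_kind; ex0 : R; ey0 : R; ehx : R; ehy : R }.
Definition elem_ok (T : elem) : Prop := ehx T <> 0 /\ ehy T <> 0.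
Definition NE (T : elem) : nat := nedges (ekind T).

(* vertices A_0 .. A_{N-1} (indices taken mod N); edge b_i = [A_i, A_{i+1}] *)
Definition vertex (T : elem) (i : nat) : pt :=
  let x0 := ex0 T in let y0 := ey0 T in let hx := ehx T in let hy := ehy T in
  match ekind T with
  | Tri => match Nat.modulo i 3 with
           | 0%nat => (x0, y0) | 1%nat => (x0 + hx, y0) | _ => (x0, y0 + hy) end
  | Rect => match Nat.modulo i 4 with
           | 0%nat => (x0, y0) | 1%nat => (x0 + hx, y0)
           | 2%nat => (x0 + hx, y0 + hy) | _ => (x0, y0 + hy) end
  end.

Definition edge_pt (T : elem) (i : nat) (t : R) : pt :=
  padd (vertex T i) (pscal t (psub (vertex T (S i)) (vertex T i))).
Definition midpoint (T : elem) (i : nat) : pt := edge_pt T i (1/2).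
Definition edge_len (T : elem) (i : nat) : R := pnorm (psub (vertex T (S i)) (vertex T i)).
Definition on_edge (T : elem) (i : nat) (X : pt) : Prop :=
  exists t, 0 <= t <= 1 /\ X = edge_pt T i t.
Definition on_boundary (T : elem) (X : pt) : Prop :=
  exists i, (i < NE T)%nat /\ on_edge T i X.
Definition inT (T : elem) (X : pt) : Prop :=
  exists a b, 0 <= a <= 1 /\ 0 <= b <= 1 /\
    (ekind T = Tri -> a + b <= 1) /\
    X = (ex0 T + a * ehx T, ey0 T + b * ehy T).

(* p = pa + pb x + pc y + pd (x^2 - y^2); for Crouzeix-Raviart (Tri) pd = 0 *)
Record ppoly := mkPoly { pa : R; pb : R; pc : R; pd : R }.
Definition poly0 : ppoly := mkPoly 0 0 0 0.
Definition inPi (k : elem_kind) (p : ppoly) : Prop :=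
  match k with Tri => pd p = 0 | Rect => True end.
Definition peval (p : ppoly) (X : pt) : R :=
  pa p + pb p * fst X + pc p * snd X + pd p * (fst X ^ 2 - snd X ^ 2).
Definition pgrad (p : ppoly) (X : pt) : pt :=
  (pb p + 2 * pd p * fst X, pc p - 2 * pd p * snd X).
Definition pdxx (p : ppoly) : R := 2 * pd p.

(* D, E : the two points of Gamma cap dT; nbar : a unit normal of l = [D,E];
   sgn = +1/-1 : T^+ (and T_p^+) lie on the side {sgn * nbar.(X-D) > 0} of l;
   F, v : the point F and the vector v(F) of the jump condition (J2). *)
Record iface := mkIface { iD : pt; iE : pt; inbar : pt; isgn : R; iF : pt; iv : pt }.
Inductive variant := VCurve | VLine.

Definition on_l (I : iface) (X : pt) : Prop :=
  exists t, 0 <= t <= 1 /\ X = padd (iD I) (pscal t (psub (iE I) (iD I))).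

Definition iface_ok (T : elem) (var : variant) (I : iface) : Prop :=
  iD I <> iE I /\ on_boundary T (iD I) /\ on_boundary T (iE I) /\
  ~ (exists i, (i < NE T)%nat /\ on_edge T i (iD I) /\ on_edge T i (iE I)) /\
  pnorm (inbar I) = 1 /\ dot (inbar I) (psub (iE I) (iD I)) = 0 /\
  (isgn I = 1 \/ isgn I = -1) /\
  match var with
  | VCurve => inT T (iF I) /\ iF I <> iD I /\ iF I <> iE I /\
              pnorm (iv I) = 1 /\ dot (inbar I) (iv I) > 0
  | VLine => on_l I (iF I) /\ iv I = inbar I
  end.

Definition sside (I : iface) (s : bool) (X : pt) : R :=
  (if s then 1 else -1) * isgn I * dot (inbar I) (psub X (iD I)).

Definition in_Is (T : elem) (I : iface) (s : bool) (i : nat) : Prop :=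
  forall t, 0 <= t <= 1 -> sside I s (edge_pt T i t) >= 0.
Definition in_Iint (T : elem) (I : iface) (i : nat) : Prop :=
  (exists t, 0 <= t <= 1 /\ sside I true (edge_pt T i t) > 0) /\
  (exists t, 0 <= t <= 1 /\ sside I false (edge_pt T i t) > 0).

Definition pw_integrand (T : elem) (I : iface) (i : nat) (fp fm : pt -> R) (t : R) : R :=
  let P := edge_pt T i t in
  if Rlt_dec 0 (sside I true P) then fp P else fm P.
Definition pw_edge_int (T : elem) (I : iface) (i : nat) (fp fm : pt -> R) : R :=
  edge_len T i * Rint (pw_integrand T I i fp fm) 0 1.

Definition side_edge_int (T : elem) (I : iface) (s : bool) (i : nat) (g : pt -> R) : R :=
  edge_len T i *
  Rint (fun t => let P := edge_pt T i t in
                 if Rlt_dec 0 (sside I s P) then g P else 0) 0 1.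

(* IFE functions: pairs (p on T_p^+, m on T_p^-) with jump conditions J1, J2 *)
Definition IFE (k : elem_kind) (I : iface) (bp bm : R) (p m : ppoly) : Prop :=
  inPi k p /\ inPi k m /\
  (forall X, on_l I X -> peval m X = peval p X) /\
  (k = Rect -> pdxx m = pdxx p) /\
  bm * dot (pgrad m (iF I)) (iv I) = bp * dot (pgrad p (iF I)) (iv I).

Record mat2 := mkMat { m11 : R; m12 : R; m21 : R; m22 : R }.
Definition rs (bp bm : R) (s : bool) : R := if s then bp / bm else bm / bp.
Definition Mbar (bp bm : R) (s : bool) (nb v : pt) : mat2 :=
  let r := rs bp bm s in
  let c := / dot nb v in
  mkMat (c * (snd nb * snd v + r * fst nb * fst v)) (c * ((r - 1) * fst nb * snd v))
        (c * ((r - 1) * snd nb * fst v)) (c * (fst nb * fst v + r * snd nb * snd v)).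
Definition MTapply (M : mat2) (w : pt) : pt :=
  (m11 M * fst w + m21 M * snd w, m12 M * fst w + m22 M * snd w).
Definition MmITapply (M : mat2) (w : pt) : pt := psub (MTapply M w) w.

Definition Lambda_s (T : elem) (I : iface) (bp bm : R) (phi : nat -> ppoly * ppoly)
  (Xbar : nat -> pt) (s : bool) (X : pt) : pt :=
  let phis i := if s then fst (phi i) else snd (phi i) in
  let M := Mbar bp bm s (inbar I) (iv I) in
  let term i k :=
      vcomp k (psub (midpoint T i) X) * peval (phis i) X
    + ind (in_Is T I (negb s) i) *
        vcomp k (MmITapply M (psub (midpoint T i) (Xbar i))) * peval (phis i) X
    + ind (in_Iint T I i) *
        (/ edge_len T i *
         side_edge_int T I (negb s) i (fun P => vcomp k (MmITapply M (psub P (Xbar i)))))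
        * peval (phis i) X in
  (sum_f_R0 (fun i => term i true) (NE T - 1),
   sum_f_R0 (fun i => term i false) (NE T - 1)).

Definition LambdaP T I bp bm phi Xbar (X : pt) : pt :=
  Lambda_s T I bp bm phi Xbar true X.
Definition LambdaM T I bp bm phi Xbar (X : pt) : pt :=
  MTapply (Mbar bp bm true (inbar I) (iv I)) (Lambda_s T I bp bm phi Xbar false X).

(* Fix X and a component k, and let a be the k-th column of Mbar^s(F) - I.
   Since a is orthogonal to l, the function W equal to (P - X)_k on side s and
   to (P - X)_k + a.(P - D) on the other side satisfies the jump conditions, so
   it is an IFE function; its edge means are exactly the coefficients of the
   phi_i^s in the k-th component of Lambda_s(X) (the integrands involving Xbar_i
   only see a.(P - Xbar_i) = a.(P - D), as Xbar_i lies on l). Expanding W in the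
   dual basis phi_i and evaluating the side-s piece at X gives
   0 = W(X) = (Lambda_s(X))_k. Hence Lambda vanishes identically: it is the
   zero IFE function, with zero edge integrals. *)

From Pilot Require Import Defs.
From Stdlib Require Import Reals Lra Lia Psatz Classical ClassicalEpsilon FunctionalExtensionality.
From Coquelicot Require Import Coquelicot.
Open Scope R_scope.

Lemma Rint_RInt f : ex_RInt f 0 1 -> Rint f 0 1 = RInt f 0 1.
Proof.
  intro Hf. unfold Rint. destruct excluded_middle_informative as [H|H].
  - symmetry. apply RInt_Reals.
  - exfalso. apply H. exists (ex_RInt_Reals_0 _ _ _ Hf). exact I.
Qed.

Lemma ex_RInt_ext01 (f g : R -> R) :
  (forall x, 0 < x < 1 -> f x = g x) -> ex_RInt f 0 1 -> ex_RInt g 0 1.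
Proof.
  intro Hfg. apply ex_RInt_ext. intros x Hx.
  rewrite Rmin_left, Rmax_right in Hx by lra. now apply Hfg.
Qed.

Lemma RInt_ext01 (f g : R -> R) :
  (forall x, 0 < x < 1 -> f x = g x) -> RInt f 0 1 = RInt g 0 1.
Proof.
  intro Hfg. apply RInt_ext. intros x Hx.
  rewrite Rmin_left, Rmax_right in Hx by lra. now apply Hfg.
Qed.

Lemma ex_RInt_plus_scal f g c :
  ex_RInt f 0 1 -> ex_RInt g 0 1 -> ex_RInt (fun t => f t + c * g t) 0 1.
Proof.
  intros Hf Hg. apply (ex_RInt_plus f (fun t => scal c (g t))); auto.
  now apply ex_RInt_scal.
Qed.

Lemma RInt_plus_scal f g c : ex_RInt f 0 1 -> ex_RInt g 0 1 ->
  RInt (fun t => f t + c * g t) 0 1 = RInt f 0 1 + c * RInt g 0 1.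
Proof.
  intros Hf Hg. rewrite (RInt_plus f (fun t => scal c (g t))); auto.
  - exact (f_equal (Rplus (RInt f 0 1)) (RInt_scal g 0 1 c Hg)).
  - now apply ex_RInt_scal.
Qed.

Lemma RInt_const0 : RInt (fun _ => 0) 0 1 = 0 :> R.
Proof. rewrite RInt_const. unfold scal; simpl. unfold mult; simpl. ring. Qed.

Lemma RInt_affine a b : RInt (fun t => a + b * t) 0 1 = a + b / 2 :> R.
Proof.
  apply is_RInt_unique.
  replace (a + b / 2) with
    (minus ((fun t => a * t + b * t ^ 2 / 2) 1) ((fun t => a * t + b * t ^ 2 / 2) 0))
    by (unfold minus, plus, opp; simpl; field).
  apply (is_RInt_derive (fun t => a * t + b * t ^ 2 / 2) (fun t => a + b * t)).
  - intros x _. auto_derive; auto. field.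
  - intros x _. apply (@ex_derive_continuous R_AbsRing R_NormedModule). auto_derive; auto.
Qed.

Lemma ex_RInt_if_pos (tau : R -> R) c : (forall x, continuous tau x) ->
  ex_RInt (fun t => if Rlt_dec 0 (tau t) then c * tau t else 0) 0 1.
Proof.
  intro Htau.
  (* the integrand is c times the positive part (tau + |tau|) / 2 of tau *)
  apply (ex_RInt_ext01 (fun t => c * ((tau t + Rabs (tau t)) / 2))).
  { intros x _. destruct Rlt_dec.
    - rewrite Rabs_right by lra. field.
    - rewrite Rabs_left1 by lra. field. }
  apply (@ex_RInt_continuous R_CompleteNormedModule). intros x _.
  apply (continuous_mult (fun _ => c)); [apply continuous_const|].
  apply (continuous_mult (fun t => tau t + Rabs (tau t)) (fun _ => /2));
    [|apply continuous_const].
  apply (continuous_plus tau); auto. now apply continuous_Rabs_comp.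
Qed.

Lemma continuous_peval_line m A V x : continuous (fun t => peval m (padd A (pscal t V))) x.
Proof.
  apply (@ex_derive_continuous R_AbsRing R_NormedModule).
  unfold peval, padd, pscal; simpl. auto_derive; auto.
Qed.

Lemma continuous_sside_line I s A V x :
  continuous (fun t => sside I s (padd A (pscal t V))) x.
Proof.
  apply (@ex_derive_continuous R_AbsRing R_NormedModule).
  unfold sside, dot, psub, padd, pscal; simpl. auto_derive; auto.
Qed.

Lemma ind_true (P : Prop) : P -> Defs.ind P = 1.
Proof. intro H. unfold Defs.ind. destruct excluded_middle_informative; tauto. Qed.

Lemma ind_false (P : Prop) : ~ P -> Defs.ind P = 0.
Proof. intro H. unfold Defs.ind. destruct excluded_middle_informative; tauto. Qed.

Lemma sum_kronecker (c : nat -> R) L j n : (j <= n)%nat ->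
  sum_f_R0 (fun i => c i * (L * (if Nat.eq_dec i j then 1 else 0))) n = L * c j.
Proof.
  induction n as [|n IH]; intro Hj; cbn [sum_f_R0].
  - replace j with 0%nat by lia. destruct (Nat.eq_dec 0 0); [ring|lia].
  - destruct (Nat.eq_dec (S n) j) as [<-|Hne].
    + rewrite (sum_eq _ (fun _ => 0)), sum_cte.
      * ring.
      * intros i Hi. destruct (Nat.eq_dec i (S n)); [lia|ring].
    + rewrite IH by lia. ring.
Qed.

(** * Geometry of the interface segment *)

Definition iface_nondeg (I : iface) : Prop :=
  iD I <> iE I /\ dot (inbar I) (inbar I) = 1 /\ dot (inbar I) (psub (iE I) (iD I)) = 0 /\
  isgn I * isgn I = 1 /\ dot (inbar I) (iv I) <> 0.

Lemma iface_ok_nondeg T var I : iface_ok T var I -> iface_nondeg I.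
Proof.
  intros (HDE & _ & _ & _ & Hn & Hd & Hs & Hv).
  assert (Hnn : dot (inbar I) (inbar I) = 1).
  { assert (0 <= dot (inbar I) (inbar I)) by (unfold dot; nra).
    unfold pnorm in Hn. rewrite <- (sqrt_sqrt (dot (inbar I) (inbar I))) by auto.
    rewrite Hn. ring. }
  repeat split; auto.
  - destruct Hs as [-> | ->]; ring.
  - destruct var; [destruct Hv as (_ & _ & _ & _ & Hv) | destruct Hv as (_ & ->)]; lra.
Qed.

Lemma sside_false I P : sside I false P = - sside I true P.
Proof. unfold sside; simpl; ring. Qed.

Lemma on_l_D I : on_l I (iD I).
Proof.
  exists 0. split; [lra|].
  destruct (iD I), (iE I); unfold padd, pscal, psub; simpl; f_equal; ring.
Qed.

Lemma on_l_E I : on_l I (iE I).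
Proof.
  exists 1. split; [lra|].
  destruct (iD I), (iE I); unfold padd, pscal, psub; simpl; f_equal; ring.
Qed.

Lemma dot_psub_padd_pscal g A V t D :
  dot g (psub (padd A (pscal t V)) D) = dot g (psub A D) + dot g V * t.
Proof. unfold dot, psub, padd, pscal; simpl; ring. Qed.

Lemma perp_cross_eq0 (u n g : pt) : u <> (0, 0) -> dot n u = 0 -> dot g u = 0 ->
  fst g * snd n - snd g * fst n = 0.
Proof.
  destruct u as [ux uy], n as [nx ny], g as [gx gy]; unfold dot; simpl.
  intros Hu Hn Hg.
  assert (H1 : (gx * ny - gy * nx) * ux = ny * (gx * ux + gy * uy) - gy * (nx * ux + ny * uy))
    by ring.
  assert (H2 : (gx * ny - gy * nx) * uy = gx * (nx * ux + ny * uy) - nx * (gx * ux + gy * uy))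
    by ring.
  rewrite Hn, Hg, !Rmult_0_r, Rminus_0_r in H1, H2.
  destruct (Req_dec ux 0) as [Hx|Hx]; [destruct (Req_dec uy 0) as [Hy|Hy]|].
  - subst. now contradiction Hu.
  - apply Rmult_integral in H2. lra.
  - apply Rmult_integral in H1. lra.
Qed.

Lemma perp_chord_sside I g : iface_nondeg I -> dot g (psub (iE I) (iD I)) = 0 ->
  forall P, dot g (psub P (iD I)) = (dot g (inbar I) * isgn I) * sside I true P.
Proof.
  intros (HDE & Hnn & Hnd & Hss & _) Hgd P.
  assert (Hu : psub (iE I) (iD I) <> (0, 0)).
  { intro H. apply HDE. destruct (iD I), (iE I). unfold psub in H; simpl in H.
    injection H; intros. f_equal; lra. }
  pose proof (perp_cross_eq0 _ _ _ Hu Hnd Hgd) as Hcross.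
  unfold sside. simpl.
  destruct (inbar I) as [nx ny], g as [gx gy], (psub P (iD I)) as [wx wy].
  unfold dot in *; simpl in *.
  (* g is parallel to the unit normal: g.w (n.n) - (g.n)(n.w) = cross(g,n) cross(w,n) *)
  transitivity ((gx * wx + gy * wy) * (nx * nx + ny * ny)
                - (gx * ny - gy * nx) * (wx * ny - wy * nx)).
  - rewrite Hnn, Hcross. ring.
  - transitivity ((gx * nx + gy * ny) * (nx * wx + ny * wy) * (isgn I * isgn I)); [|ring].
    rewrite Hss. ring.
Qed.

(** * IFE functions *)

Lemma IFE_pd_eq k I bp bm p m : IFE k I bp bm p m -> pd p = pd m.
Proof.
  intros (Hp & Hm & _ & Hxx & _). destruct k; simpl in *.
  - lra.
  - unfold pdxx in Hxx. specialize (Hxx eq_refl). lra.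
Qed.

Lemma IFE_jump_sside k I bp bm p m : iface_nondeg I -> IFE k I bp bm p m ->
  exists kap, forall P, peval p P = peval m P + kap * sside I true P.
Proof.
  intros Hnd HI. pose proof (IFE_pd_eq _ _ _ _ _ _ HI) as Hpd.
  destruct HI as (_ & _ & HJ1 & _ & _).
  set (g := (pb p - pb m, pc p - pc m)).
  assert (Hdiff : forall P, peval p P - peval m P = (pa p - pa m) + dot g P).
  { intro P. unfold peval, dot, g; simpl. rewrite Hpd. ring. }
  assert (HD := HJ1 _ (on_l_D I)). assert (HE := HJ1 _ (on_l_E I)).
  assert (Hgd : dot g (psub (iE I) (iD I)) = 0).
  { replace (dot g (psub (iE I) (iD I))) with (dot g (iE I) - dot g (iD I))
      by (unfold dot, psub; simpl; ring).
    pose proof (Hdiff (iE I)); pose proof (Hdiff (iD I)). lra. }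
  exists (dot g (inbar I) * isgn I). intro P.
  rewrite <- (perp_chord_sside I g Hnd Hgd P).
  replace (dot g (psub P (iD I))) with (dot g P - dot g (iD I))
    by (unfold dot, psub; simpl; ring).
  pose proof (Hdiff P); pose proof (Hdiff (iD I)). lra.
Qed.

Lemma peval_poly0 X : peval poly0 X = 0.
Proof. unfold peval; simpl; ring. Qed.

Lemma IFE_poly0 k I bp bm : IFE k I bp bm poly0 poly0.
Proof.
  split; [|split; [|split; [|split]]]; try reflexivity.
  - destruct k; simpl; auto.
  - destruct k; simpl; auto.
  - unfold dot, pgrad, poly0; simpl; ring.
Qed.

Definition pcomb (p q : ppoly) (c : R) : ppoly :=
  mkPoly (pa p + c * pa q) (pb p + c * pb q) (pc p + c * pc q) (pd p + c * pd q).

Lemma peval_pcomb p q c X : peval (pcomb p q c) X = peval p X + c * peval q X.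
Proof. unfold peval, pcomb; simpl; ring. Qed.

Lemma dot_pgrad_pcomb p q c F v :
  dot (pgrad (pcomb p q c) F) v = dot (pgrad p F) v + c * dot (pgrad q F) v.
Proof. unfold dot, pgrad, pcomb; simpl; ring. Qed.

Lemma IFE_pcomb k I bp bm p m q m' c :
  IFE k I bp bm p m -> IFE k I bp bm q m' -> IFE k I bp bm (pcomb p q c) (pcomb m m' c).
Proof.
  intros (Hp & Hm & HJ1 & Hxx & HJ2) (Gp & Gm & GJ1 & Gxx & GJ2).
  repeat split.
  - destruct k; simpl in *; auto. rewrite Hp, Gp; ring.
  - destruct k; simpl in *; auto. rewrite Hm, Gm; ring.
  - intros X HX. rewrite !peval_pcomb, HJ1, GJ1; auto.
  - intro Hk. specialize (Hxx Hk); specialize (Gxx Hk). unfold pdxx in *; simpl. nra.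
  - rewrite !dot_pgrad_pcomb, !Rmult_plus_distr_l, HJ2.
    replace (bm * (c * dot (pgrad m' (iF I)) (iv I)))
      with (c * (bm * dot (pgrad m' (iF I)) (iv I))) by ring.
    rewrite GJ2. ring.
Qed.

Lemma ex_RInt_pw_integrand_IFE T k I bp bm p m j : iface_nondeg I -> IFE k I bp bm p m ->
  ex_RInt (pw_integrand T I j (peval p) (peval m)) 0 1.
Proof.
  intros Hnd HI. destruct (IFE_jump_sside _ _ _ _ _ _ Hnd HI) as [kap Hkap].
  apply (ex_RInt_ext01 (fun t => peval m (edge_pt T j t) + 1 *
     (if Rlt_dec 0 (sside I true (edge_pt T j t)) then kap * sside I true (edge_pt T j t)
      else 0))).
  { intros x _. unfold pw_integrand. cbv zeta. rewrite Rmult_1_l.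
    destruct Rlt_dec; [now rewrite Hkap | ring]. }
  apply ex_RInt_plus_scal.
  - apply (@ex_RInt_continuous R_CompleteNormedModule). intros. apply continuous_peval_line.
  - apply ex_RInt_if_pos. intro. apply continuous_sside_line.
Qed.

Lemma pw_edge_int_pcomb T k I bp bm p m q m' c j : iface_nondeg I ->
  IFE k I bp bm p m -> IFE k I bp bm q m' ->
  pw_edge_int T I j (peval (pcomb p q c)) (peval (pcomb m m' c)) =
  pw_edge_int T I j (peval p) (peval m) + c * pw_edge_int T I j (peval q) (peval m').
Proof.
  intros Hnd H1 H2. unfold pw_edge_int.
  assert (Hpw : pw_integrand T I j (peval (pcomb p q c)) (peval (pcomb m m' c)) =
    fun t => pw_integrand T I j (peval p) (peval m) t
             + c * pw_integrand T I j (peval q) (peval m') t).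
  { apply functional_extensionality; intro t. unfold pw_integrand.
    destruct Rlt_dec; apply peval_pcomb. }
  pose proof (ex_RInt_pw_integrand_IFE T _ _ _ _ _ _ j Hnd H1) as E1.
  pose proof (ex_RInt_pw_integrand_IFE T _ _ _ _ _ _ j Hnd H2) as E2.
  rewrite Hpw, (Rint_RInt _ (ex_RInt_plus_scal _ _ c E1 E2)), (Rint_RInt _ E1),
    (Rint_RInt _ E2), RInt_plus_scal by auto.
  ring.
Qed.

Fixpoint pcomb_sum (W : ppoly) (ph : nat -> ppoly) (c : nat -> R) (n : nat) : ppoly :=
  match n with
  | O => pcomb W (ph O) (- c O)
  | S n' => pcomb (pcomb_sum W ph c n') (ph (S n')) (- c (S n'))
  end.

Lemma peval_pcomb_sum W ph c n X :
  peval (pcomb_sum W ph c n) X = peval W X - sum_f_R0 (fun i => c i * peval (ph i) X) n.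
Proof. induction n; simpl; rewrite peval_pcomb; try rewrite IHn; ring. Qed.

Lemma IFE_pcomb_sum k I bp bm Wp Wm php phm c n :
  IFE k I bp bm Wp Wm -> (forall i, (i <= n)%nat -> IFE k I bp bm (php i) (phm i)) ->
  IFE k I bp bm (pcomb_sum Wp php c n) (pcomb_sum Wm phm c n).
Proof.
  intros HW Hph. induction n as [|n IH]; simpl; apply IFE_pcomb; auto.
Qed.

Lemma pw_edge_int_pcomb_sum T k I bp bm Wp Wm php phm c n j : iface_nondeg I ->
  IFE k I bp bm Wp Wm -> (forall i, (i <= n)%nat -> IFE k I bp bm (php i) (phm i)) ->
  pw_edge_int T I j (peval (pcomb_sum Wp php c n)) (peval (pcomb_sum Wm phm c n)) =
  pw_edge_int T I j (peval Wp) (peval Wm) -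
  sum_f_R0 (fun i => c i * pw_edge_int T I j (peval (php i)) (peval (phm i))) n.
Proof.
  intros Hnd HW Hph. induction n as [|n IH]; simpl.
  - rewrite (pw_edge_int_pcomb T k I bp bm); auto. ring.
  - rewrite (pw_edge_int_pcomb T k I bp bm); auto.
    + rewrite IH by auto. ring.
    + apply IFE_pcomb_sum; auto.
Qed.

Definition edge_mean (T : elem) (I : iface) (j : nat) (p m : ppoly) : R :=
  / edge_len T j * pw_edge_int T I j (peval p) (peval m).

Section Interpolation.

Variables (T : elem) (I : iface) (bp bm : R) (phi : nat -> ppoly * ppoly).

Hypothesis nondeg : iface_nondeg I.
Hypothesis phi_IFE :
  forall i, (i < NE T)%nat -> IFE (ekind T) I bp bm (fst (phi i)) (snd (phi i)).
Hypothesis phi_dual : forall i j, (i < NE T)%nat -> (j < NE T)%nat ->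
  edge_mean T I j (fst (phi i)) (snd (phi i)) = if Nat.eq_dec i j then 1 else 0.
Hypothesis unisolvent : forall p m, IFE (ekind T) I bp bm p m ->
  (forall j, (j < NE T)%nat -> pw_edge_int T I j (peval p) (peval m) = 0) ->
  p = poly0 /\ m = poly0.

Lemma edge_len_neq0 j : (j < NE T)%nat -> edge_len T j <> 0.
Proof.
  intros Hj H0. specialize (phi_dual j j Hj Hj).
  destruct (Nat.eq_dec j j) as [_|]; [|lia].
  unfold edge_mean, pw_edge_int in phi_dual. rewrite H0 in phi_dual. lra.
Qed.

Lemma IFE_interpolation p m : IFE (ekind T) I bp bm p m -> forall (s : bool) X,
  peval (if s then p else m) X =
  sum_f_R0 (fun i => edge_mean T I i p m *
                     peval (if s then fst (phi i) else snd (phi i)) X) (NE T - 1).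
Proof.
  intros HI s X.
  set (c := fun i => edge_mean T I i p m).
  set (n := (NE T - 1)%nat).
  assert (Hn : forall i, (i <= n)%nat -> (i < NE T)%nat)
    by (unfold n, NE; destruct (ekind T); simpl; lia).
  assert (Hph : forall i, (i <= n)%nat -> IFE (ekind T) I bp bm (fst (phi i)) (snd (phi i)))
    by auto.
  destruct (unisolvent (pcomb_sum p (fun i => fst (phi i)) c n)
                       (pcomb_sum m (fun i => snd (phi i)) c n)) as [Hp0 Hm0].
  - now apply IFE_pcomb_sum.
  - intros j Hj. rewrite (pw_edge_int_pcomb_sum T (ekind T) I bp bm) by auto.
    rewrite (sum_eq _ (fun i => c i * (edge_len T j * (if Nat.eq_dec i j then 1 else 0)))).
    + rewrite sum_kronecker by (unfold n; lia). unfold c, edge_mean.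
      field. now apply edge_len_neq0.
    + intros i Hi. rewrite <- phi_dual by auto. unfold edge_mean.
      field. now apply edge_len_neq0.
  - destruct s; cbv iota.
    + pose proof (peval_pcomb_sum p (fun i => fst (phi i)) c n X) as E.
      rewrite Hp0, peval_poly0 in E. unfold c in E. lra.
    + pose proof (peval_pcomb_sum m (fun i => snd (phi i)) c n X) as E.
      rewrite Hm0, peval_poly0 in E. unfold c in E. lra.
Qed.

End Interpolation.

(** * The IFE function behind Lambda_s *)

Definition acol (M : mat2) (k : bool) : pt :=
  if k then (m11 M - 1, m21 M) else (m12 M, m22 M - 1).

Lemma vcomp_MmITapply M k w : vcomp k (MmITapply M w) = dot (acol M k) w.
Proof. destruct k; unfold MmITapply, MTapply, acol, dot, psub, vcomp; simpl; ring. Qed.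

Lemma dot_acol_Mbar bp bm s n v k w : dot (acol (Mbar bp bm s n v) k) w =
  / dot n v * (rs bp bm s - 1) * vcomp k v * dot n w + (/ dot n v * dot n v - 1) * vcomp k w.
Proof. destruct k; unfold acol, Mbar, dot, vcomp; simpl; ring. Qed.

Lemma acol_Mbar_perp_chord I bp bm s k : iface_nondeg I ->
  dot (acol (Mbar bp bm s (inbar I) (iv I)) k) (psub (iE I) (iD I)) = 0.
Proof.
  intros (_ & _ & Hd & _ & Hv). rewrite dot_acol_Mbar, Hd, Rinv_l by auto. ring.
Qed.

Definition coord_poly (X : pt) (k : bool) : ppoly :=
  mkPoly (- vcomp k X) (if k then 1 else 0) (if k then 0 else 1) 0.
Definition affine_poly (a D : pt) : ppoly := mkPoly (- dot a D) (fst a) (snd a) 0.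

Lemma peval_coord_poly X k P : peval (coord_poly X k) P = vcomp k (psub P X).
Proof. destruct k; unfold peval, coord_poly, vcomp, psub; simpl; ring. Qed.

Lemma peval_affine_poly a D P : peval (affine_poly a D) P = dot a (psub P D).
Proof. unfold peval, affine_poly, dot, psub; simpl; ring. Qed.

Definition witness (I : iface) (bp bm : R) (s : bool) (X : pt) (k : bool) (t : bool)
  : ppoly :=
  if Bool.eqb t s then coord_poly X k
  else pcomb (coord_poly X k) (affine_poly (acol (Mbar bp bm s (inbar I) (iv I)) k) (iD I)) 1.

Lemma IFE_witness kd I bp bm s X k : iface_nondeg I -> 0 < bp -> 0 < bm ->
  IFE kd I bp bm (witness I bp bm s X k true) (witness I bp bm s X k false).
Proof.
  intros Hnd Hbp Hbm.
  set (a := acol (Mbar bp bm s (inbar I) (iv I)) k).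
  assert (Ha : dot a (psub (iE I) (iD I)) = 0) by apply (acol_Mbar_perp_chord I bp bm s k Hnd).
  assert (Hl : forall P, on_l I P -> dot a (psub P (iD I)) = 0).
  { intros P [t [_ ->]]. rewrite dot_psub_padd_pscal, Ha. unfold dot, psub; simpl; ring. }
  destruct Hnd as (_ & _ & _ & _ & Hv).
  repeat split.
  - destruct kd, s; simpl; auto; ring.
  - destruct kd, s; simpl; auto; ring.
  - intros P HP. destruct s; unfold witness; simpl;
      rewrite peval_pcomb, peval_affine_poly, Hl; auto; ring.
  - intros _. destruct s; unfold witness, pdxx; simpl; ring.
  - assert (Hgc : forall F v, dot (pgrad (coord_poly X k) F) v = vcomp k v)
      by (intros; destruct k; unfold pgrad, coord_poly, dot, vcomp; simpl; ring).
    assert (Hga : forall F v, dot (pgrad (affine_poly a (iD I)) F) v = dot a v)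
      by (intros; unfold pgrad, affine_poly, dot; simpl; ring).
    destruct s; unfold witness; simpl; rewrite ?dot_pgrad_pcomb, Hgc; fold a; rewrite ?Hga;
      unfold a; rewrite dot_acol_Mbar, Rinv_l by auto; unfold rs; field; lra.
Qed.

Lemma peval_witness_self I bp bm s X k : peval (witness I bp bm s X k s) X = 0.
Proof.
  unfold witness. rewrite Bool.eqb_reflx, peval_coord_poly.
  destruct k; unfold vcomp, psub; simpl; ring.
Qed.

(** * Edge means of the witness *)

Definition Lambda_coef (T : elem) (I : iface) (bp bm : R) (Xbar : nat -> pt)
  (s k : bool) (X : pt) (i : nat) : R :=
  let M := Mbar bp bm s (inbar I) (iv I) in
  vcomp k (psub (midpoint T i) X)
  + Defs.ind (in_Is T I (negb s) i) * vcomp k (MmITapply M (psub (midpoint T i) (Xbar i)))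
  + Defs.ind (in_Iint T I i) *
      (/ edge_len T i * side_edge_int T I (negb s) i
                          (fun P => vcomp k (MmITapply M (psub P (Xbar i))))).

Lemma vcomp_Lambda_s T I bp bm phi Xbar s k X :
  vcomp k (Lambda_s T I bp bm phi Xbar s X) =
  sum_f_R0 (fun i => Lambda_coef T I bp bm Xbar s k X i *
     peval (if s then fst (phi i) else snd (phi i)) X) (NE T - 1).
Proof.
  unfold Lambda_s. cbv zeta. destruct k; cbn [vcomp]; apply sum_eq; intros i _;
    unfold Lambda_coef; cbn [vcomp]; ring.
Qed.

Lemma sside_sign (I : iface) (s : bool) (P : pt) : sside I true P = (if s then 1 else -1) * sside I s P.
Proof. destruct s; unfold sside; simpl; ring. Qed.

Lemma RInt_coord_poly_edge T j X k :
  RInt (fun t => peval (coord_poly X k) (edge_pt T j t)) 0 1 = vcomp k (psub (midpoint T j) X) :> R.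
Proof.
  rewrite (RInt_ext01 _ (fun t => (vcomp k (vertex T j) - vcomp k X) +
                                vcomp k (psub (vertex T (S j)) (vertex T j)) * t)).
  - rewrite RInt_affine. unfold midpoint, edge_pt.
    destruct k; unfold vcomp, psub, padd, pscal; simpl; field.
  - intros x _. rewrite peval_coord_poly. unfold edge_pt.
    destruct k; unfold vcomp, psub, padd, pscal; simpl; ring.
Qed.

Definition side_integrand (T : elem) (I : iface) (s : bool) (j : nat) (kap t : R) : R :=
  if Rlt_dec 0 (sside I s (edge_pt T j t)) then kap * sside I true (edge_pt T j t) else 0.

Lemma ex_RInt_side_integrand T I s j kap : ex_RInt (side_integrand T I s j kap) 0 1.
Proof.
  apply (ex_RInt_ext01 (fun t => if Rlt_dec 0 (sside I s (edge_pt T j t))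
                               then (kap * if s then 1 else -1) * sside I s (edge_pt T j t)
                               else 0)).
  - intros x _. unfold side_integrand. rewrite (sside_sign I s). destruct Rlt_dec; ring.
  - apply ex_RInt_if_pos. intro. apply continuous_sside_line.
Qed.

Lemma side_edge_int_sside T I s j kap :
  side_edge_int T I s j (fun P => kap * sside I true P) =
  edge_len T j * RInt (side_integrand T I s j kap) 0 1.
Proof. unfold side_edge_int. rewrite <- Rint_RInt by apply ex_RInt_side_integrand. reflexivity. Qed.

Lemma RInt_side_integrand_full T I s j kap : in_Is T I s j ->
  RInt (side_integrand T I s j kap) 0 1 = kap * sside I true (midpoint T j) :> R.
Proof.
  intro HIs.
  assert (Hlin : forall t, kap * sside I true (edge_pt T j t) = kap * sside I true (vertex T j)
            + (kap * dot (inbar I) (psub (vertex T (S j)) (vertex T j)) * isgn I) * t).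
  { intro t. unfold edge_pt, sside; simpl. rewrite dot_psub_padd_pscal. ring. }
  rewrite (RInt_ext01 _ (fun t => kap * sside I true (vertex T j) +
      (kap * dot (inbar I) (psub (vertex T (S j)) (vertex T j)) * isgn I) * t)).
  - rewrite RInt_affine. unfold midpoint. rewrite Hlin. field.
  - intros x Hx. rewrite <- Hlin.
    unfold side_integrand. specialize (HIs x ltac:(lra)).
    (* in_Is only gives sside I s >= 0; where it is 0, so is sside I true *)
    destruct Rlt_dec; [reflexivity|].
    assert (Hz : sside I true (edge_pt T j x) = 0)
      by (destruct s; rewrite ?sside_false in *; lra).
    rewrite Hz. ring.
Qed.

Lemma RInt_side_integrand_empty T I s j kap :
  (forall t, 0 <= t <= 1 -> sside I s (edge_pt T j t) <= 0) ->
  RInt (side_integrand T I s j kap) 0 1 = 0 :> R.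
Proof.
  intro Hneg. rewrite (RInt_ext01 _ (fun _ => 0)), RInt_const0; auto.
  intros x Hx.
  unfold side_integrand. specialize (Hneg x ltac:(lra)). destruct Rlt_dec; lra.
Qed.

Lemma in_Is_not_Iint T I s j : in_Is T I s j -> ~ in_Iint T I j.
Proof.
  intros HIs [[t1 [Ht1 H1]] [t2 [Ht2 H2]]].
  destruct s; [specialize (HIs t2 Ht2) | specialize (HIs t1 Ht1)];
    rewrite ?sside_false in *; lra.
Qed.

Lemma not_in_Is_Iint T I s j : ~ in_Is T I (negb s) j -> ~ in_Iint T I j ->
  forall t, 0 <= t <= 1 -> sside I (negb s) (edge_pt T j t) <= 0.
Proof.
  intros HIs HIi t Ht. apply Rnot_lt_le. intro Hpos.
  apply HIs. intros u Hu. apply Rnot_lt_ge. intro Hneg.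
  apply HIi. destruct s; cbn [negb] in *; split;
    [exists u | exists t | exists t | exists u]; split; auto; rewrite ?sside_false in *; lra.
Qed.

Lemma pw_integrand_witness T I bp bm s X k j kap :
  (forall P, dot (acol (Mbar bp bm s (inbar I) (iv I)) k) (psub P (iD I))
             = kap * sside I true P) ->
  pw_integrand T I j (peval (witness I bp bm s X k true))
                     (peval (witness I bp bm s X k false)) =
  fun t => peval (coord_poly X k) (edge_pt T j t) + 1 * side_integrand T I (negb s) j kap t.
Proof.
  intro Ha. apply functional_extensionality; intro t.
  unfold pw_integrand, side_integrand, witness. cbv zeta.
  set (P := edge_pt T j t).
  destruct s; simpl; rewrite ?sside_false; rewrite ?peval_pcomb, ?peval_affine_poly, ?Ha;
    destruct (Rlt_dec 0 (sside I true P)); destruct (Rlt_dec 0 (- sside I true P));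
    try lra; try ring;
    replace (sside I true P) with 0 by lra; ring.
Qed.

Lemma edge_mean_witness T I bp bm Xbar s k X j :
  iface_nondeg I -> on_l I (Xbar j) -> edge_len T j <> 0 ->
  edge_mean T I j (witness I bp bm s X k true) (witness I bp bm s X k false) =
  Lambda_coef T I bp bm Xbar s k X j.
Proof.
  intros Hnd HX HL.
  set (M := Mbar bp bm s (inbar I) (iv I)).
  set (a := acol M k).
  set (kap := dot a (inbar I) * isgn I).
  assert (Ha : forall P, dot a (psub P (iD I)) = kap * sside I true P)
    by (apply perp_chord_sside, acol_Mbar_perp_chord; auto).
  (* Xbar j lies on l, so it may be replaced by D *)
  assert (Hg : forall P, vcomp k (MmITapply M (psub P (Xbar j))) = kap * sside I true P).
  { intro P. rewrite <- Ha. destruct HX as [t [_ ->]]. rewrite vcomp_MmITapply. fold a.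
    transitivity (dot a (psub P (iD I)) - t * dot a (psub (iE I) (iD I))).
    - unfold dot, psub, padd, pscal; simpl; ring.
    - unfold a, M. rewrite acol_Mbar_perp_chord by auto. ring. }
  unfold edge_mean, pw_edge_int, Lambda_coef. fold M.
  rewrite (pw_integrand_witness T I bp bm s X k j kap Ha).
  assert (HexC : ex_RInt (fun t => peval (coord_poly X k) (edge_pt T j t)) 0 1).
  { apply (@ex_RInt_continuous R_CompleteNormedModule). intros. apply continuous_peval_line. }
  pose proof (ex_RInt_side_integrand T I (negb s) j kap) as HexS.
  rewrite (Rint_RInt _ (ex_RInt_plus_scal _ _ 1 HexC HexS)), RInt_plus_scal by auto.
  rewrite RInt_coord_poly_edge.
  replace (side_edge_int T I (negb s) j (fun P => vcomp k (MmITapply M (psub P (Xbar j)))))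
    with (side_edge_int T I (negb s) j (fun P => kap * sside I true P))
    by (unfold side_edge_int; f_equal; f_equal; apply functional_extensionality;
        intro t; now rewrite Hg).
  rewrite side_edge_int_sside, Hg.
  destruct (classic (in_Is T I (negb s) j)) as [HIs|HIs].
  - rewrite (ind_true _ HIs), (ind_false _ (in_Is_not_Iint _ _ _ _ HIs)),
      RInt_side_integrand_full by auto.
    field; auto.
  - rewrite (ind_false _ HIs). destruct (classic (in_Iint T I j)) as [HIi|HIi].
    + rewrite (ind_true _ HIi). field; auto.
    + rewrite (ind_false _ HIi), RInt_side_integrand_empty
        by (apply not_in_Is_Iint; auto).
      field; auto.
Qed.

Lemma vcomp_Lambda_s_eq0 T var I bp bm phi Xbar s k X :
  iface_ok T var I -> 0 < bp -> 0 < bm ->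
  (forall i, (i < NE T)%nat -> IFE (ekind T) I bp bm (fst (phi i)) (snd (phi i))) ->
  (forall i j, (i < NE T)%nat -> (j < NE T)%nat ->
     edge_mean T I j (fst (phi i)) (snd (phi i)) = if Nat.eq_dec i j then 1 else 0) ->
  (forall p m, IFE (ekind T) I bp bm p m ->
     (forall j, (j < NE T)%nat -> pw_edge_int T I j (peval p) (peval m) = 0) ->
     p = poly0 /\ m = poly0) ->
  (forall i, (i < NE T)%nat -> on_l I (Xbar i)) ->
  vcomp k (Lambda_s T I bp bm phi Xbar s X) = 0.
Proof.
  intros Hok Hbp Hbm HIFE Hdual Huni HXbar.
  pose proof (iface_ok_nondeg _ _ _ Hok) as Hnd.
  set (W := witness I bp bm s X k).
  pose proof (IFE_interpolation T I bp bm phi Hnd HIFE Hdual Huni (W true) (W false)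
                (IFE_witness _ _ _ _ _ _ _ Hnd Hbp Hbm) s X) as Hexp.
  replace (if s then W true else W false) with (W s) in Hexp by (destruct s; reflexivity).
  unfold W in Hexp. rewrite peval_witness_self in Hexp.
  rewrite vcomp_Lambda_s. etransitivity; [|exact (eq_sym Hexp)]. apply sum_eq. intros i Hi.
  assert (Hi' : (i < NE T)%nat) by (unfold NE in *; destruct (ekind T); simpl in *; lia).
  rewrite (edge_mean_witness T I bp bm Xbar); auto.
  now apply (edge_len_neq0 T I phi Hdual).
Qed.

Lemma vcomp_MTapply_eq0 M w k :
  vcomp true w = 0 -> vcomp false w = 0 -> vcomp k (MTapply M w) = 0.
Proof.
  destruct w as [wx wy]. cbn. intros -> ->.
  destruct k; unfold MTapply, vcomp; simpl; ring.
Qed.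

Lemma RiemannInt_pw_integrand_eq0 T I j (fp fm : pt -> R) :
  (forall P, fp P = 0) -> (forall P, fm P = 0) ->
  exists pr : Riemann_integrable (pw_integrand T I j fp fm) 0 1, RiemannInt pr = 0.
Proof.
  intros Hp Hm.
  replace (pw_integrand T I j fp fm) with (fct_cte 0).
  - exists (RiemannInt_P14 0 1 0). rewrite RiemannInt_P15. ring.
  - apply functional_extensionality; intro t.
    unfold pw_integrand, fct_cte. destruct Rlt_dec; auto.
Qed.

Theorem mainTheorem9 (T : elem) (var : variant) (I : iface) (bp bm : R)
  (phi : nat -> ppoly * ppoly) (Xbar : nat -> pt) :
  elem_ok T -> iface_ok T var I -> 0 < bp -> 0 < bm ->
  (forall i, (i < NE T)%nat -> IFE (ekind T) I bp bm (fst (phi i)) (snd (phi i))) ->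
  (forall i j, (i < NE T)%nat -> (j < NE T)%nat ->
     / edge_len T j * pw_edge_int T I j (peval (fst (phi i))) (peval (snd (phi i)))
     = if Nat.eq_dec i j then 1 else 0) ->
  (forall p m, IFE (ekind T) I bp bm p m ->
     (forall j, (j < NE T)%nat -> pw_edge_int T I j (peval p) (peval m) = 0) ->
     p = poly0 /\ m = poly0) ->
  (forall i, (i < NE T)%nat -> on_l I (Xbar i)) ->
  forall k : bool,
    (exists p m, IFE (ekind T) I bp bm p m /\
       (forall X, vcomp k (LambdaP T I bp bm phi Xbar X) = peval p X) /\
       (forall X, vcomp k (LambdaM T I bp bm phi Xbar X) = peval m X)) /\
    (forall j, (j < NE T)%nat ->
       exists pr : Riemann_integrable
         (pw_integrand T I j (fun P => vcomp k (LambdaP T I bp bm phi Xbar P))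
                             (fun P => vcomp k (LambdaM T I bp bm phi Xbar P))) 0 1,
         RiemannInt pr = 0).
Proof.
  intros _ Hok Hbp Hbm HIFE Hdual Huni HXbar k.
  pose proof (fun s k X => vcomp_Lambda_s_eq0 T var I bp bm phi Xbar s k X
                             Hok Hbp Hbm HIFE Hdual Huni HXbar) as H0.
  assert (HP : forall X, vcomp k (LambdaP T I bp bm phi Xbar X) = 0) by (intro; apply H0).
  assert (HM : forall X, vcomp k (LambdaM T I bp bm phi Xbar X) = 0)
    by (intro; apply vcomp_MTapply_eq0; apply H0).
  split.
  - exists poly0, poly0. split; [apply IFE_poly0|].
    split; intro X; rewrite peval_poly0; auto.
  - intros j _. now apply RiemannInt_pw_integrand_eq0.
Qed.
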